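(* There exists an invertible $23\times23$ binary matrix such that the corresponding linear kernel has partial distance sequence $(1,2,2,2,2,2,4,4,4,4,4,4,8,8,8,8,8,8,8,12,12,12,16)$. Consequently $E_{23}\ge\frac1{23}\sum_{i=0}^{22}\log_{23}D_{min}^{(i)}\approx0.50705$.
   Context: A kernel of dimension $\ell$ is a bijection $g:\{0,1\}^\ell\to\{0,1\}^\ell$; a linear kernel is $g({\bf u})={\bf u}G$ over $\mathbb{F}_2$ for an invertible $\ell\times\ell$ binary matrix $G$. ${\bf a}\bullet{\bf b}$ denotes concatenation, $d_H$ Hamming distance. Partial distances: $D_{min}^{(i)}=\min\{d_H(g({\bf w}\bullet 0\bullet{\bf u}),g({\bf w}\bullet 1\bullet {\bf v})) : {\bf w}\in\{0,1\}^i,\ {\bf u},{\bf v}\in\{0,1\}^{\ell-i-1}\}$, $i=0,\dots,\ell-1$; exponent $E(g)=\frac1\ell\sum_{i}\log_\ell D_{min}^{(i)}$; $E_\ell=\max_g E(g)$ over all kernels of dimension $\ell$. *)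

From HB Require Import structures.
From mathcomp Require Import all_boot all_order all_algebra.
From Stdlib Require Import Reals.

Set Implicit Arguments.
Unset Strict Implicit.
Unset Printing Implicit Defensive.

Definition word (l : nat) := 'rV['F_2]_l.

Definition lin_kernel (l : nat) (G : 'M['F_2]_l) : word l -> word l :=
  fun u => mulmx u G.

Definition hamming (l : nat) (x y : word l) : nat :=
  #|[set j : 'I_l | x ord0 j != y ord0 j]|.

(* (x, y) = (w.0.u, w.1.v) for some w of length i and u, v of length l-i-1:
   x and y agree on the first i coordinates, x_i = 0 and y_i = 1. *)
Definition partial_pair (l : nat) (i : 'I_l) (p : word l * word l) : bool :=
  [forall j : 'I_l, (j < i)%N ==> (p.1 ord0 j == p.2 ord0 j)] &&
  (p.1 ord0 i == (@GRing.zero 'F_2)) && (p.2 ord0 i == (@GRing.one 'F_2)).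

(* D_min^(i)(g): minimum of d_H(g x, g y) over such pairs.  The neutral
   element l is harmless since every Hamming distance is <= l and the
   index set is nonempty for i < l. *)
Definition partial_dist (l : nat) (g : word l -> word l) (i : 'I_l) : nat :=
  \big[minn/l]_(p : word l * word l | partial_pair i p) hamming (g p.1) (g p.2).

Definition logb (l d : nat) : R := Rdiv (ln (INR d)) (ln (INR l)).

Definition kernel_exponent (l : nat) (g : word l -> word l) : R :=
  Rmult (Rinv (INR l)) (\big[Rplus/R0]_(i < l) logb l (partial_dist g i)).

(* E_l = max of E(g) over all kernels, i.e. all bijections of {0,1}^l
   (on a finite type, injective = bijective). *)
Definition E_max (l : nat) : R :=
  \big[Rmax/R0]_(g : {ffun word l -> word l} | injectiveb g) kernel_exponent g.

Definition pd_seq23 : seq nat :=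
  [:: 1; 2; 2; 2; 2; 2; 4; 4; 4; 4; 4; 4; 8; 8; 8; 8; 8; 8; 8; 12; 12; 12; 16]%N.

From HB Require Import structures.
From mathcomp Require Import all_boot all_order all_algebra.
From Stdlib Require Import Reals.

Set Implicit Arguments.
Unset Strict Implicit.
Unset Printing Implicit Defensive.

Import GRing.Theory.

(* For a linear kernel u |-> uG, the pair (w.0.u, w.1.v) is sent at distance
   wt((w.1.v - w.0.u) G), and the differences are exactly the messages c with
   c_0 = ... = c_(i-1) = 0 and c_i = 1.  Hence D_min^(i) is the minimum weight
   of the coset g_i + <g_(i+1), ..., g_22> of the rows of G.  We take G lower
   unitriangular (so invertible), exhibit for each i a coset element of the
   claimed weight, and certify that none is lighter by a branch-and-bound
   search over the subsets of {g_(i+1), ..., g_22}, evaluated by [vm_compute].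
   Since u |-> uG is a bijection of {0,1}^23, E_23 >= E(G). *)

Definition xorv (u v : seq bool) : seq bool :=
  mkseq (fun j => nth false u j (+) nth false v j) (size u).

Definition andv (u v : seq bool) : seq bool :=
  mkseq (fun j => nth false u j && nth false v j) (size u).

Definition weight (u : seq bool) : nat := count idfun u.

Lemma size_foldl_xorv u rs : size (foldl xorv u rs) = size u.
Proof. by elim: rs u => //= r rs IH u; rewrite IH size_mkseq. Qed.

Lemma nth_foldl_xorv u rs j : j < size u ->
  nth false (foldl xorv u rs) j =
  nth false u j (+) \big[addb/false]_(r <- rs) nth false r j.
Proof.
elim: rs u => [|r rs IH] u ju /=; first by rewrite big_nil addbF.
by rewrite IH ?size_mkseq // nth_mkseq // big_cons addbA.
Qed.

Lemma weight_le_nth u w : size u = size w ->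
  (forall j, nth false u j -> nth false w j) -> weight u <= weight w.
Proof.
elim: u w => [|a u IH] [|b w] //= [szuw] le_uw.
apply: leq_add; first by case: a le_uw => // /(_ 0 isT) /= ->.
by apply: IH => // j; apply: (le_uw j.+1).
Qed.

Definition free_cols (m : nat) (rs : seq (seq bool)) : seq bool :=
  mkseq (fun j => all (fun r => ~~ nth false r j) rs) m.

Fixpoint with_free_cols (m : nat) (rs : seq (seq bool)) :=
  if rs is r :: rs' then (r, free_cols m rs) :: with_free_cols m rs' else [::].

(* Written with [if] rather than [||]/[&&], so that the call-by-value
   evaluation of [vm_compute] actually prunes. *)
Fixpoint bb_weight_ge (t : nat) (v : seq bool) rms : bool :=
  if rms is (r, free) :: rms' then
    if t <= weight (andv v free) then true
    else if bb_weight_ge t v rms' then bb_weight_ge t (xorv v r) rms' else false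
  else t <= weight v.

(* Branch and bound over the subsums of [rs]: a branch is cut as soon as
   the columns no remaining row can change already carry weight [t]. *)
Definition sums_weight_ge (t : nat) (v : seq bool) (rs : seq (seq bool)) :=
  bb_weight_ge t v (with_free_cols (size v) rs).

Lemma weight_andv_free_cols_le v m rs rs' : {subset rs' <= rs} ->
  weight (andv v (free_cols m rs)) <= weight (foldl xorv v rs').
Proof.
move=> sub_rs; apply: weight_le_nth; first by rewrite size_mkseq size_foldl_xorv.
move=> j; case: (ltnP j (size v)) => jv; last by rewrite nth_default ?size_mkseq.
rewrite nth_mkseq // nth_foldl_xorv // => /andP[-> free_j].
rewrite big1_seq // => r /andP[_ /sub_rs r_rs].
case: (ltnP j m) free_j => jm; last by rewrite nth_default ?size_mkseq.
by rewrite nth_mkseq // => /allP/(_ r r_rs)/negbTE.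
Qed.

Lemma bb_weight_geP t m v rs : bb_weight_ge t v (with_free_cols m rs) ->
  forall rs', subseq rs' rs -> t <= weight (foldl xorv v rs').
Proof.
elim: rs v => [|r rs IH] v; first by move=> ? rs'; rewrite subseq0 => /eqP->.
rewrite [bb_weight_ge _ _ _]/=; case: ifP => [bound _ rs' /mem_subseq sub_rs | _].
  exact: leq_trans bound (weight_andv_free_cols_le _ _ sub_rs).
case: ifP => // skip_r take_r [|x rs'].
  by move=> _; exact: IH _ skip_r [::] (sub0seq rs).
rewrite [subseq _ _]/=; case: eqP => [-> | _]; first exact: IH _ take_r rs'.
exact: IH _ skip_r (x :: rs').
Qed.

Lemma geq_bigminn_seq (T : eqType) (r : seq T) (P : pred T) (F : T -> nat) m x :
  x \in r -> P x -> \big[minn/m]_(y <- r | P y) F y <= F x.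
Proof.
elim: r => // a r IH; rewrite inE big_cons => /predU1P[-> -> | xr Px].
  exact: geq_minl.
by case: (P a); rewrite ?geq_min IH ?orbT.
Qed.

Lemma le_bigRmax_seq (T : eqType) (r : seq T) (P : pred T) (F : T -> R) x :
  x \in r -> P x -> Rle (F x) (\big[Rmax/R0]_(y <- r | P y) F y).
Proof.
elim: r => // a r IH; rewrite inE big_cons => /predU1P[-> -> | xr Px].
  exact: Rmax_l.
case: (P a); last exact: IH.
exact: Rle_trans (IH xr Px) (Rmax_r _ _).
Qed.

Local Open Scope ring_scope.

Definition wt (l : nat) (c : word l) : nat := #|[set j : 'I_l | c 0 j != 0]|.

Lemma hamming_lin_kernel l (G : 'M['F_2]_l) x y :
  hamming (lin_kernel G x) (lin_kernel G y) = wt ((y - x) *m G).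
Proof.
apply: eq_card => j; rewrite !inE eq_sym -subr_eq0.
by rewrite /lin_kernel mulmxBl !mxE.
Qed.

Definition partial_coset l (i : 'I_l) (c : word l) : Prop :=
  (forall j : 'I_l, (j < i)%nat -> c 0 j = 0) /\ c 0 i = 1.

Lemma partial_pair_coset l (i : 'I_l) x y :
  partial_pair i (x, y) -> partial_coset i (y - x).
Proof.
case/andP=> /andP[/forallP eq_prefix /eqP x_i] /eqP y_i; split; last first.
  by rewrite !mxE x_i y_i subr0.
by move=> j lt_ji; rewrite !mxE; move/implyP/(_ lt_ji)/eqP: (eq_prefix j) => ->; rewrite subrr.
Qed.

Lemma partial_coset_pair l (i : 'I_l) c :
  partial_coset i c -> partial_pair i (0, c).
Proof.
case=> c_prefix c_i; rewrite /partial_pair /= mxE eqxx c_i eqxx !andbT.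
by apply/forallP=> j; apply/implyP=> /c_prefix->; rewrite mxE.
Qed.

Lemma partial_dist_lin_le l (G : 'M['F_2]_l) (i : 'I_l) c :
  partial_coset i c -> (partial_dist (lin_kernel G) i <= wt (c *m G))%nat.
Proof.
move/partial_coset_pair=> pair_c.
have := geq_bigminn_seq (fun p => hamming (lin_kernel G p.1) (lin_kernel G p.2)) l
  (mem_index_enum (0, c)) pair_c.
by rewrite hamming_lin_kernel subr0.
Qed.

Lemma partial_dist_lin_ge l (G : 'M['F_2]_l) (i : 'I_l) t :
  (t <= l)%nat -> (forall c, partial_coset i c -> t <= wt (c *m G))%nat ->
  (t <= partial_dist (lin_kernel G) i)%nat.
Proof.
move=> le_tl wt_ge; apply: (big_ind (fun d => t <= d)%nat) => //.
  by move=> a b ta tb; rewrite leq_min ta.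
by case=> x y /partial_pair_coset; rewrite hamming_lin_kernel; apply: wt_ge.
Qed.

Lemma lin_kernel_inj l (G : 'M['F_2]_l) : G \in unitmx -> injective (lin_kernel G).
Proof. by move=> unitG; apply: can_inj (mulmxK unitG). Qed.

Lemma kernel_exponent_le_E_max l (g : word l -> word l) :
  injective g -> Rle (kernel_exponent g) (E_max l).
Proof.
move=> inj_g; pose f : {ffun word l -> word l} := [ffun u => g u].
have -> : kernel_exponent g = kernel_exponent f.
  congr (Rmult _ _); apply: eq_bigr => i _; congr (logb _ _).
  by apply: eq_bigr => p _; rewrite !ffunE.
apply: le_bigRmax_seq (mem_index_enum f) _.
by apply/injectiveP=> u v; rewrite !ffunE; apply: inj_g.
Qed.

Lemma mem_iota_ord n (i : 'I_n) : val i \in iota 0 n.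
Proof. by rewrite mem_iota ltn_ord. Qed.

Definition b2F (b : bool) : 'F_2 := if b then 1 else 0.

Lemma b2F_neq0 (x : 'F_2) : b2F (x != 0) = x.
Proof. by case: x => -[|[|//]] ?; apply/val_inj. Qed.

Lemma b2F_eq0 b : (b2F b == 0) = ~~ b.
Proof. by case: b. Qed.

Lemma b2F_addb : {morph b2F : a b / a (+) b >-> a + b}.
Proof. by case; case; apply/val_inj. Qed.

Lemma b2F_andb a b : b2F (a && b) = b2F a * b2F b.
Proof. by case: a; rewrite /= ?mul1r ?mul0r. Qed.

Section SupportMatrix.

Variables (n : nat) (supp : seq (seq nat)).

Definition supp_mx : 'M['F_2]_n := \matrix_(k, j) b2F (val j \in nth [::] supp k).

Definition row_bits (k : nat) : seq bool := mkseq (mem (nth [::] supp k)) n.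

Definition lower_unitriangular : bool :=
  all (fun k => (k \in nth [::] supp k) && all (leq^~ k) (nth [::] supp k)) (iota 0 n).

Lemma supp_mx_unit : lower_unitriangular -> supp_mx \in unitmx.
Proof.
move=> /allP tri_k; have tri (k : 'I_n) := tri_k k (mem_iota_ord k).
rewrite unitmxE det_trig; last first.
  apply/is_trig_mxP=> k j lt_kj; rewrite mxE.
  case/andP: (tri k) => _ /allP le_k.
  by rewrite /b2F; case: ifP => // /le_k; rewrite leqNgt lt_kj.
by rewrite big1 ?unitr1 // => k _; rewrite mxE; case/andP: (tri k) => ->.
Qed.

Lemma mul_supp_mx (c : word n) (j : 'I_n) :
  (c *m supp_mx) 0 j =
  b2F (\big[addb/false]_(k < n) ((c 0 k != 0) && (val j \in nth [::] supp k))).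
Proof.
rewrite (big_morph b2F b2F_addb (erefl : b2F false = 0)) mxE.
by apply: eq_bigr => k _; rewrite b2F_andb b2F_neq0 mxE.
Qed.

(* The order only matters for the search time: taking the rows of highest
   index first frees the rightmost columns as early as possible. *)
Definition tail_rows (i : nat) : seq nat := rev (iota i.+1 (n - i.+1)).

Lemma card_nth_bits (w : seq bool) :
  size w = n -> #|[set j : 'I_n | nth false w j]| = weight w.
Proof.
move=> size_w; rewrite cardE /enum_mem size_filter /weight -{2}(mkseq_nth false w).
rewrite size_w /mkseq count_map -val_enum_ord count_map enumT.
by apply: eq_count => j; rewrite /= in_set.
Qed.

Definition coset_bits (i : nat) (cb : nat -> bool) : seq bool :=
  foldl xorv (row_bits i) [seq row_bits k | k <- tail_rows i & cb k].

Lemma weight_coset_bits_le i cb : (weight (coset_bits i cb) <= n)%nat.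
Proof. by have := count_size idfun (coset_bits i cb); rewrite size_foldl_xorv size_mkseq. Qed.

Lemma wt_supp_mx (i : 'I_n) (c : word n) (cb : nat -> bool) :
  partial_coset i c -> (forall k : 'I_n, cb k = (c 0 k != 0)) ->
  wt (c *m supp_mx) = weight (coset_bits i cb).
Proof.
case=> c_prefix c_i cbE; rewrite /wt -card_nth_bits ?size_foldl_xorv ?size_mkseq //.
apply: eq_card => j; rewrite !inE mul_supp_mx b2F_eq0 negbK.
rewrite nth_foldl_xorv ?size_mkseq // nth_mkseq // big_map big_filter big_rev.
rewrite (eq_bigr (fun k : 'I_n => cb k && (val j \in nth [::] supp k))); last first.
  by move=> k _; rewrite cbE.
rewrite -(big_mkord xpredT (fun k => cb k && (val j \in nth [::] supp k))).
have -> : index_iota 0 n = iota 0 i ++ (i : nat) :: iota i.+1 (n - i.+1).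
  rewrite /index_iota subn0 -[_ :: _]/(iota i (n - i.+1).+1) subnSK //.
  by rewrite -{2}(add0n i) -iotaD subnKC // ltnW.
rewrite big_cat big_cons big1_seq /=; last first.
  move=> k; rewrite mem_iota add0n => lt_ki.
  by rewrite (cbE (Ordinal (ltn_trans lt_ki (ltn_ord i)))) c_prefix ?eqxx.
rewrite (cbE i) c_i oner_eq0 [in RHS]big_mkcond; congr addb.
by apply: eq_bigr => k _; rewrite nth_mkseq //; case: (cb k).
Qed.

Lemma partial_dist_supp_mx_ge (i : 'I_n) t : (t <= n)%nat ->
  sums_weight_ge t (row_bits i) (map row_bits (tail_rows i)) ->
  (t <= partial_dist (lin_kernel supp_mx) i)%nat.
Proof.
move=> le_tn all_ge; apply: partial_dist_lin_ge => // c pc.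
pose cb k := oapp (fun k' : 'I_n => c 0 k' != 0) false (insub k).
rewrite (@wt_supp_mx i c cb) => [|//|k]; last by rewrite /cb valK.
by apply: bb_weight_geP all_ge _ _; rewrite map_subseq ?filter_subseq.
Qed.

Lemma partial_dist_supp_mx_le (i : 'I_n) (s : seq nat) :
  val i \in s -> all (leq i) s ->
  (partial_dist (lin_kernel supp_mx) i <= weight (coset_bits i (mem s)))%nat.
Proof.
move=> s_i /allP s_ge; pose c : word n := \row_k b2F (val k \in s).
have pc : partial_coset i c.
  split; last by rewrite mxE s_i.
  by move=> j lt_ji; rewrite mxE /b2F; case: ifP => // /s_ge; rewrite leqNgt lt_ji.
rewrite -(wt_supp_mx pc) => [|k]; first exact: partial_dist_lin_le.
by rewrite mxE b2F_eq0 negbK.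
Qed.

Definition partial_dist_certificate (i d : nat) (s : seq nat) : bool :=
  [&& i \in s, all (leq i) s, weight (coset_bits i (mem s)) == d &
      sums_weight_ge d (row_bits i) (map row_bits (tail_rows i))].

Lemma partial_dist_supp_mx (i : 'I_n) d s :
  partial_dist_certificate i d s -> partial_dist (lin_kernel supp_mx) i = d.
Proof.
case/and4P=> s_i s_ge /eqP wt_s all_ge; apply/eqP; rewrite eqn_leq.
rewrite -{1}wt_s partial_dist_supp_mx_le //= partial_dist_supp_mx_ge //.
by rewrite -wt_s weight_coset_bits_le.
Qed.

End SupportMatrix.

Definition G23_supp : seq (seq nat) := [::
  [:: 0];
  [:: 0; 1];
  [:: 0; 2];
  [:: 0; 3];
  [:: 0; 4];
  [:: 3; 5];
  [:: 0; 1; 5; 6];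
  [:: 3; 4; 5; 7];
  [:: 0; 1; 2; 3; 5; 6; 7; 8];
  [:: 0; 3; 4; 7; 8; 9];
  [:: 0; 2; 3; 4; 5; 6; 7; 8; 9; 10];
  [:: 1; 2; 3; 9; 10; 11];
  [:: 0; 1; 2; 8; 9; 10; 11; 12];
  [:: 0; 1; 2; 3; 4; 7; 8; 13];
  [:: 1; 2; 3; 5; 6; 7; 8; 9; 11; 12; 13; 14];
  [:: 0; 1; 3; 4; 5; 6; 7; 8; 10; 11; 12; 15];
  [:: 2; 6; 7; 9; 10; 11; 14; 16];
  [:: 0; 2; 4; 6; 7; 8; 10; 11; 12; 13; 14; 17];
  [:: 1; 3; 4; 5; 6; 7; 8; 13; 14; 15; 16; 18];
  [:: 0; 2; 3; 4; 5; 7; 8; 11; 15; 16; 18; 19];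
  [:: 0; 2; 6; 8; 9; 11; 12; 13; 14; 15; 16; 20];
  [:: 3; 4; 8; 10; 11; 12; 13; 14; 16; 17; 19; 21];
  [:: 0; 1; 2; 4; 5; 8; 9; 10; 11; 12; 13; 18; 19; 20; 21; 22]].

Definition G23_witnesses : seq (seq nat) := [::
  [:: 0]; [:: 1]; [:: 2]; [:: 3]; [:: 4]; [:: 5]; [:: 6]; [:: 7];
  [:: 8; 10]; [:: 9; 10]; [:: 10; 11; 15]; [:: 11; 12]; [:: 12]; [:: 13];
  [:: 14; 15]; [:: 15; 17]; [:: 16]; [:: 17; 18; 19]; [:: 18; 19]; [:: 19];
  [:: 20]; [:: 21]; [:: 22]].

Lemma G23_lower_unitriangular : lower_unitriangular 23 G23_supp.
Proof. by vm_compute. Qed.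

Lemma G23_certified : all (fun i =>
    partial_dist_certificate 23 G23_supp i (nth 0%nat pd_seq23 i) (nth [::] G23_witnesses i))
  (iota 0 23).
Proof. by vm_compute. Qed.

Theorem mainTheorem14 :
  exists G : 'M['F_2]_23,
    G \in unitmx /\
    (forall i : 'I_23, partial_dist (lin_kernel G) i = nth 0%N pd_seq23 i) /\
    Rge (E_max 23)
        (Rmult (Rinv (INR 23))
               (\big[Rplus/R0]_(i < 23) logb 23 (nth 0%N pd_seq23 i))).
Proof.
pose G := supp_mx 23 G23_supp.
have unit_G : G \in unitmx := supp_mx_unit G23_lower_unitriangular.
have pd_G (i : 'I_23) : partial_dist (lin_kernel G) i = nth 0%nat pd_seq23 i.
  exact: partial_dist_supp_mx (allP G23_certified i (mem_iota_ord i)).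
exists G; split=> //; split=> //; apply: Rle_ge.
rewrite (eq_bigr (fun i => logb 23 (partial_dist (lin_kernel G) i))).
  exact: kernel_exponent_le_E_max (lin_kernel_inj unit_G).
by move=> i _; rewrite pd_G.
Qed.
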